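(* Let $a,b$ be integers, let $G\in\mathscr{G}_{a,b}$, and let $P=u_0u_1\ldots u_k$ be an internal path or an internal cycle in $G$. Then: (i) $k\le 3$; (ii) if $k=3$, then there is no internal path $v_0v_1v_2$ of length $2$ in $G$ with $d_G(v_0)=d_G(v_2)=d_G(u_0)$; (iii) if $k=3$, then $d_G(u_0)=d_G(u_3)$; moreover, if $G$ contains another internal path $v_0v_1v_2v_3$, then $d_G(v_0)=d_G(v_3)=d_G(u_0)=d_G(u_3)$.
   Context: All graphs are simple and connected; $d_G(v)$ is the degree of $v$ and $N_G(v)$ its neighbourhood. For integers $a,b$, $\mathscr{G}_{a,b}$ is the set of connected graphs $G$ such that for every $v\in V_G$, $\sum_{u\in N_G(v)}d_G(u)=a\,d_G(v)+b-d_G(v)^2$. A path $u_0u_1\ldots u_k$ ($k\ge1$) in $G$ with $d_G(u_0),d_G(u_k)\ge 3$ and $d_G(u_i)=2$ for $1\le i\le k-1$ is called an internal path if $u_0\ne u_k$, and an internal cycle if $u_0=u_k$ (then $k\ge 3$). *)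

From mathcomp Require Import all_boot all_order all_algebra.
Set Implicit Arguments. Unset Strict Implicit. Unset Printing Implicit Defensive.
Import GRing.Theory Num.Theory.

Definition simple_graph (T : finType) (e : rel T) : Prop :=
  symmetric e /\ irreflexive e.

Definition connected_graph (T : finType) (e : rel T) : Prop :=
  forall x y : T, connect e x y.

Definition deg (T : finType) (e : rel T) (v : T) : nat := #|[pred u | e v u]|.

(* G in \mathscr{G}_{a,b} (connectedness and simplicity stated separately) *)
Definition in_Gab (T : finType) (e : rel T) (a b : int) : Prop :=
  forall v : T,
    (\sum_(u | e v u) (deg e u)%:Z)%R =
    (a * (deg e v)%:Z + b - (deg e v)%:Z ^+ 2)%R.

(* The walk u_0 u_1 ... u_k is encoded as x :: p, with k = size p and
   u_i = nth x (x :: p) i.  Common conditions of internal paths/cycles. *)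
Definition internal_walk (T : finType) (e : rel T) (x : T) (p : seq T) : Prop :=
  let k := size p in
  let u := nth x (x :: p) in
  [/\ 1 <= k, path e x p, 3 <= deg e (u 0), 3 <= deg e (u k)
    & forall i, 1 <= i < k -> deg e (u i) = 2].

Definition internal_path (T : finType) (e : rel T) (x : T) (p : seq T) : Prop :=
  [/\ internal_walk e x p, x != last x p & uniq (x :: p)].

Definition internal_cycle (T : finType) (e : rel T) (x : T) (p : seq T) : Prop :=
  [/\ internal_walk e x p, x = last x p, 3 <= size p & uniq p].

(* At a vertex of degree 2 the defining identity of G_{a,b} reads
   d(x) + d(y) = 2a + b - 4 for its two neighbours x, y.  Along an internal
   walk u0 u1 u2 u3 ... this gives d(u0) + 2 = 2a + b - 4 at u1 and
   2 + d(u3) = 2a + b - 4 at u2, so d(u3) = d(u0) >= 3; hence u3 is an end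
   vertex (k <= 3).  An internal path v0 v1 v2 with d(v0) = d(v2) = d(u0)
   would give 2 d(u0) = d(u0) + 2, i.e. d(u0) = 2, which is impossible. *)
From mathcomp Require Import all_boot all_order all_algebra zify.
Import GRing.Theory Num.Theory.

Section DegreeTwoVertices.

Context {T : finType} {e : rel T} {a b : int}.
Hypotheses (e_sym : symmetric e) (e_Gab : in_Gab e a b).

Lemma deg2_neighbours_deg_sum {v x y : T} :
  deg e v = 2 -> e v x -> e v y -> x != y ->
  ((deg e x + deg e y)%N%:Z = 2 * a + b - 4)%R.
Proof.
move=> dv2 vx vy xy.
have Nv : [set u | e v u] = [set x; y].
  apply/eqP; rewrite eq_sym eqEcard; apply/andP; split.
    by apply/subsetP => u; rewrite !inE => /orP[]/eqP->.
  by rewrite cards2 xy cardsE -dv2.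
have := e_Gab v; rewrite dv2.
rewrite (eq_bigl (fun u => u \in [set x; y])) => [|u]; last by rewrite -Nv inE.
rewrite big_setU1 /=; last by rewrite inE.
by rewrite big_set1 PoszD => ->; rewrite expr2 mulrC; lia.
Qed.

Lemma internal_walk_inner_deg {x : T} {p : seq T} (i : nat) :
  internal_walk e x p -> 0 < i < size p -> deg e (nth x (x :: p) i) = 2.
Proof. by case=> _ _ _ _; apply. Qed.

Lemma internal_walk2_deg_sum {y v1 v2 : T} :
  internal_walk e y [:: v1; v2] -> y != v2 ->
  ((deg e y + deg e v2)%N%:Z = 2 * a + b - 4)%R.
Proof.
move=> W yv2; have [_ /= /and3P[yv1 v1v2 _] _ _ _] := W.
have d1 := internal_walk_inner_deg 1 W erefl.
exact: deg2_neighbours_deg_sum d1 (etrans (e_sym _ _) yv1) v1v2 yv2.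
Qed.

Lemma internal_walk3_deg {x u1 u2 u3 : T} {r : seq T} :
  internal_walk e x [:: u1, u2, u3 & r] -> x != u2 -> u1 != u3 ->
  deg e u3 = deg e x /\ ((deg e x).+2%:Z = 2 * a + b - 4)%R.
Proof.
move=> W xu2 u1u3; have [_ /= /and4P[xu1 u1u2 u2u3 _] _ _ _] := W.
have d1 : deg e u1 = 2 := internal_walk_inner_deg 1 W erefl.
have d2 : deg e u2 = 2 := internal_walk_inner_deg 2 W erefl.
have at_u1 := deg2_neighbours_deg_sum d1 (etrans (e_sym _ _) xu1) u1u2 xu2.
have at_u2 := deg2_neighbours_deg_sum d2 (etrans (e_sym _ _) u1u2) u2u3 u1u3.
rewrite d2 /= in at_u1; rewrite d1 in at_u2.
by split; lia.
Qed.

Lemma internal_path_neq_skip {x u1 u2 u3 : T} {r : seq T} :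
  internal_path e x [:: u1, u2, u3 & r] -> x != u2 /\ u1 != u3.
Proof.
by case=> _ _ /=; rewrite !inE !negb_or => /and4P[/and4P[_ -> _ _] /and3P[_ -> _] _ _].
Qed.

Lemma internal_cycle_neq_skip {x u1 u2 u3 : T} {r : seq T} :
  internal_cycle e x [:: u1, u2, u3 & r] -> x != u2 /\ u1 != u3.
Proof.
case=> _ x_last _ /=; rewrite !inE !negb_or => /andP[/and3P[_ -> _] /andP[/andP[u2u3 u2r] _]].
split=> //; apply: contraTneq (mem_last u3 r) => u2x.
by rewrite x_last /= in u2x; rewrite u2x inE negb_or u2u3.
Qed.

End DegreeTwoVertices.

Theorem lemma1p6 (T : finType) (e : rel T) (a b : int) :
  simple_graph e -> connected_graph e -> in_Gab e a b ->
  forall (x : T) (p : seq T),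
    internal_path e x p \/ internal_cycle e x p ->
    [/\ size p <= 3,
        size p = 3 ->
          forall (y : T) (q : seq T), size q = 2 -> internal_path e y q ->
            deg e y = deg e x -> deg e (last y q) = deg e x -> False
      & size p = 3 ->
          deg e x = deg e (last x p) /\
          (forall (y : T) (q : seq T), size q = 3 -> internal_path e y q ->
             [/\ deg e y = deg e (last y q), deg e (last y q) = deg e x
               & deg e x = deg e (last x p)])].
Proof.
move=> [e_sym _] _ e_Gab x p Pp.
have W : internal_walk e x p by case: Pp => -[].
case: p Pp W => [|u1 [|u2 [|u3 r]]] Pp W; try by split.
have [xu2 u1u3] : x != u2 /\ u1 != u3.
  by case: Pp; [apply: internal_path_neq_skip | apply: internal_cycle_neq_skip].
have [du3 cx] := internal_walk3_deg e_sym e_Gab W xu2 u1u3.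
have [_ _ /= dx _ _] := W.
case: r Pp W du3 => [|u4 r] _ W du3; last first.
  by have := internal_walk_inner_deg 3 W erefl; rewrite /= du3 => du2; lia.
split=> // _; last split=> //.
  move=> y [|v1 [|v2 [|? ?]]] // _ [Wq yv2 _] dy dv2.
  by have := internal_walk2_deg_sum e_sym e_Gab Wq yv2; rewrite dy /= dv2; lia.
move=> y [|v1 [|v2 [|v3 [|? ?]]]] // _ Pq.
have [yv2 v1v3] := internal_path_neq_skip Pq.
have [Wq _ _] := Pq.
have [dv3 cy] := internal_walk3_deg e_sym e_Gab Wq yv2 v1v3.
by rewrite /= dv3; split=> //; case: (etrans cy (esym cx)).
Qed.
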